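(* Let $N\ge1$ and $K\ge4$ be integers and let $\gamma\in(0,1)$ satisfy $$\gamma\le\frac{1}{(F_{K+2}-3)(1+N/2)}.$$ Let $\mu_0,\sigma_0,\sigma\ge1$ satisfy $\frac{\sigma}{(\mu_0\sigma)^\gamma}\ge\sigma_0$, and define $$\lambda_k=\mu_0\sigma^{(F_{k+2}-2)+(F_{k+2}-3)N/2},\qquad \mu_k=\mu_0\sigma^{(F_{k+2}-2)+(F_{k+3}-3)N/2}\qquad(k=1,\dots,K-1),$$ $$\lambda_K=\mu_0\sigma^{(2F_K-2)+(F_{K+2}-3)N/2},\qquad \mu_K=\mu_0\sigma^{(2F_K-2)+(3F_K-3)N/2}.$$ Then the following conditions hold: $$\lambda_{k+1}^{1-\gamma}\ge\mu_k\sigma_0\ (k=0,\dots,K-1),\qquad \frac{\mu_1}{\lambda_1}\ge\Big(\frac{\lambda_1}{\mu_0}\Big)^N,$$ $$\frac{\mu_k}{\lambda_k}\ge\max\Big\{\Big(\frac{\lambda_k}{\mu_{k-1}}\frac{\lambda_{k-1}}{\mu_{k-2}}\Big)^{N/2},\ \frac{(\lambda_k/\mu_{k-1})^N(\lambda_{k-1}/\mu_{k-2})^{N/2}}{\mu_{k-1}/\lambda_{k-1}}\Big\}\quad(k=2,\dots,K-1),$$ $$\frac{\mu_K}{\lambda_K}\ge\max\Big\{\Big(\frac{\lambda_K}{\mu_{K-1}}\Big)^{N/2},\ \frac{(\lambda_K/\mu_{K-1})^N(\lambda_{K-1}/\mu_{K-2})^{N/2}}{\mu_{K-1}/\lamb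da_{K-1}}\Big\}.$$
   Context: $\{F_k\}_{k\ge0}$ is the Fibonacci sequence: $F_0=F_1=1$, $F_{k+2}=F_k+F_{k+1}$ for $k\ge0$. *)

From Stdlib Require Import Reals Lra Lia.
Open Scope R_scope.

(* Fibonacci with F_0 = F_1 = 1, F_{k+2} = F_k + F_{k+1}. *)
Fixpoint fib (k : nat) : nat :=
  match k with
  | O => 1%nat
  | S k' => match k' with
            | O => 1%nat
            | S k'' => (fib k'' + fib k')%nat
            end
  end.

Definition Fr (k : nat) : R := INR (fib k).

(* lambda_k for k = 1..K (value at other k is irrelevant). *)
Definition lam (N K : nat) (mu0 sigma : R) (k : nat) : R :=
  if Nat.eqb k K
  then mu0 * Rpower sigma ((2 * Fr K - 2) + (Fr (K + 2) - 3) * (INR N / 2))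
  else mu0 * Rpower sigma ((Fr (k + 2) - 2) + (Fr (k + 2) - 3) * (INR N / 2)).

Definition mu (N K : nat) (mu0 sigma : R) (k : nat) : R :=
  if Nat.eqb k 0 then mu0
  else if Nat.eqb k K
  then mu0 * Rpower sigma ((2 * Fr K - 2) + (3 * Fr K - 3) * (INR N / 2))
  else mu0 * Rpower sigma ((Fr (k + 2) - 2) + (Fr (k + 3) - 3) * (INR N / 2)).

From Stdlib Require Import Reals Lra Lia.
Open Scope R_scope.

(* Every lambda_k and mu_k is mu0 times a power of sigma, with exponents chosen
   so that lambda_k / mu_(k-1) = sigma^(F_k) and mu_k / lambda_k =
   sigma^(F_(k+1) N/2), except that F_(K-2) replaces both F_K and F_(K+1) at
   k = K.  The three ratio conditions therefore hold with equality, by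
   F_(k+1) = F_k + F_(k-1).  The growth condition is linear in log mu0 and
   log sigma: writing lambda_(k+1) = mu0 sigma^e and lambda_(k+1) / mu_k =
   sigma^d, it reduces to gamma (e - 1) <= d - 1.  For k = 0 both sides vanish;
   otherwise the bound on gamma makes the left side at most 1, while d >= F_2 = 2. *)

Lemma fib_SS k : fib (S (S k)) = (fib k + fib (S k))%nat.
Proof. reflexivity. Qed.

Lemma fib_le m n : (m <= n)%nat -> (fib m <= fib n)%nat.
Proof.
  induction 1 as [|n _ IH]; [lia|].
  destruct n as [|n]; [simpl in *; lia|].
  rewrite fib_SS. lia.
Qed.

Lemma Fr_SS k : Fr (S (S k)) = Fr k + Fr (S k).
Proof. unfold Fr. rewrite fib_SS. apply plus_INR. Qed.

Lemma Fr_le m n : (m <= n)%nat -> Fr m <= Fr n.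
Proof. intro Hmn. apply le_INR, fib_le, Hmn. Qed.

Lemma Fr_2 : Fr 2 = 2.
Proof. unfold Fr; simpl; lra. Qed.

Lemma Rpower_pos x y : 0 < Rpower x y.
Proof. apply exp_pos. Qed.

Lemma Rpower_div x a b : Rpower x a / Rpower x b = Rpower x (a - b).
Proof.
  unfold Rminus. rewrite Rpower_plus, Rpower_Ropp. reflexivity.
Qed.

Lemma Rpower_ratio c x a b :
  c <> 0 -> c * Rpower x a / (c * Rpower x b) = Rpower x (a - b).
Proof.
  intro Hc. rewrite <- Rpower_div. field.
  split; [apply Rgt_not_eq, Rpower_pos | exact Hc].
Qed.

Lemma Rpower_pow_mul x y (N : nat) : Rpower x y ^ N = Rpower x (INR N * y).
Proof. rewrite <- Rpower_pow, Rpower_mult, Rmult_comm by apply Rpower_pos. reflexivity. Qed.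

Lemma mul_le_1_of_le_inv g B : 0 < B -> g <= 1 / B -> g * B <= 1.
Proof.
  intros HB Hg. apply (Rmult_le_compat_r B) in Hg; [|lra].
  unfold Rdiv in Hg. rewrite Rmult_1_l, Rinv_l in Hg; lra.
Qed.

Lemma ln_le x y : 0 < x -> x <= y -> ln x <= ln y.
Proof.
  intros Hx [Hxy|<-]; [left; now apply ln_increasing | right; reflexivity].
Qed.

Lemma Rpower_one_sub_ge (mu0 sigma sigma0 gamma c d l m : R) :
  0 < mu0 -> 1 <= sigma -> 0 < sigma0 -> 0 <= gamma -> 0 < m ->
  sigma / Rpower (mu0 * sigma) gamma >= sigma0 ->
  l <= mu0 * Rpower sigma (1 + c) -> l / m = Rpower sigma d -> 1 + gamma * c <= d ->
  Rpower l (1 - gamma) >= m * sigma0.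
Proof.
  intros Hmu0 Hsigma Hsigma0 Hgamma Hm Hsigma_gamma Hl_le Hlm Hd.
  assert (Hl : l = m * Rpower sigma d) by (rewrite <- Hlm; field; lra).
  assert (Hl_pos : 0 < l) by (rewrite Hl; apply Rmult_lt_0_compat, Rpower_pos; lra).
  assert (Hs : 0 <= ln sigma) by (rewrite <- ln_1; apply ln_le; lra).
  assert (Hln_l : ln l = ln m + d * ln sigma)
    by (rewrite Hl, ln_mult, ln_Rpower by (lra || apply Rpower_pos); reflexivity).
  assert (Hln_l_le : ln l <= ln mu0 + (1 + c) * ln sigma).
  { rewrite <- ln_Rpower, <- ln_mult by (lra || apply Rpower_pos). now apply ln_le. }
  assert (Hln_sigma0 : ln sigma0 <= ln sigma - gamma * (ln mu0 + ln sigma)).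
  { apply Rge_le, ln_le in Hsigma_gamma; [|exact Hsigma0].
    unfold Rdiv in Hsigma_gamma.
    rewrite ln_mult, ln_Rinv, ln_Rpower, ln_mult in Hsigma_gamma
      by (lra || apply Rpower_pos || apply Rinv_0_lt_compat, Rpower_pos).
    lra. }
  apply Rnot_lt_ge. intro Hlt.
  apply ln_increasing in Hlt; [|apply Rpower_pos].
  rewrite ln_Rpower, ln_mult in Hlt by lra.
  assert (0 <= gamma * (ln mu0 + (1 + c) * ln sigma - ln l)) by (apply Rmult_le_pos; lra).
  assert (0 <= (d - 1 - gamma * c) * ln sigma) by (apply Rmult_le_pos; lra).
  nra.
Qed.

Section Schedule.

Variables (N K : nat) (mu0 sigma : R).
Hypotheses (Hmu0 : 0 < mu0) (Hsigma : 0 < sigma).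

Local Notation l := (lam N K mu0 sigma).
Local Notation m := (mu N K mu0 sigma).
Local Notation n := (INR N / 2).

Local Ltac case_eqb :=
  repeat match goal with
         | |- context [Nat.eqb ?a ?b] =>
             let E := fresh "E" in destruct (Nat.eqb_spec a b) as [E|E]; try lia
         end.

Lemma mu_pos k : 0 < m k.
Proof.
  unfold mu. destruct (Nat.eqb k 0), (Nat.eqb k K);
    try apply Rmult_lt_0_compat; auto using Rpower_pos.
Qed.

Lemma lam_S_div_mu j : (S j < K)%nat -> l (S j) / m j = Rpower sigma (Fr (S j)).
Proof.
  intro Hj. unfold lam, mu. case_eqb.
  - rewrite <- (Rmult_1_r mu0) at 2.
    rewrite <- (Rpower_O sigma), Rpower_ratio by lra. subst j.
    f_equal. unfold Fr; simpl; lra.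
  - rewrite Rpower_ratio by lra. f_equal.
    rewrite ?Nat.add_succ_r, ?Nat.add_0_r, (Fr_SS (S j)). ring.
Qed.

Lemma lam_K_div_mu : (2 <= K)%nat -> l K / m (K - 1) = Rpower sigma (Fr (K - 2)).
Proof.
  intro HK. destruct K as [|[|J]]; [lia|lia|]. unfold lam, mu.
  simpl Nat.sub. rewrite Nat.sub_0_r. case_eqb.
  rewrite Rpower_ratio by lra. f_equal.
  rewrite ?Nat.add_succ_r, ?Nat.add_0_r, (Fr_SS (S J)), (Fr_SS J). ring.
Qed.

Lemma mu_div_lam k : (1 <= k < K)%nat -> m k / l k = Rpower sigma (Fr (S k) * n).
Proof.
  intro Hk. unfold lam, mu. case_eqb.
  rewrite Rpower_ratio by lra. f_equal.
  rewrite ?Nat.add_succ_r, ?Nat.add_0_r, (Fr_SS (S k)). ring.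
Qed.

Lemma mu_K_div_lam : (2 <= K)%nat -> m K / l K = Rpower sigma (Fr (K - 2) * n).
Proof.
  intro HK. destruct K as [|[|J]]; [lia|lia|]. unfold lam, mu.
  simpl Nat.sub. rewrite Nat.sub_0_r. case_eqb.
  rewrite Rpower_ratio by lra. f_equal.
  rewrite ?Nat.add_succ_r, ?Nat.add_0_r, (Fr_SS (S (S J))), (Fr_SS (S J)), (Fr_SS J). ring.
Qed.

Lemma lam_le k :
  1 <= sigma -> (k <= K)%nat -> l k <= mu0 * Rpower sigma (1 + (Fr (K + 2) - 3) * (1 + n)).
Proof.
  intros Hsigma1 Hk. assert (Hn : 0 <= n) by (pose proof (pos_INR N); lra).
  unfold lam. case_eqb; apply Rmult_le_compat_l, Rle_Rpower; try lra.
  - subst k. replace (K + 2)%nat with (S (S K)) by lia.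
    rewrite Fr_SS. pose proof (Fr_le K (S K) (Nat.le_succ_diag_r K)). nra.
  - pose proof (Fr_le (k + 2) (K + 2) ltac:(lia)). nra.
Qed.

Lemma lam_S_Rpower_ge k (gamma sigma0 : R) :
  (4 <= K)%nat -> (S k <= K)%nat ->
  0 <= gamma -> gamma <= 1 / ((Fr (K + 2) - 3) * (1 + n)) ->
  1 <= sigma -> 0 < sigma0 -> sigma / Rpower (mu0 * sigma) gamma >= sigma0 ->
  Rpower (l (S k)) (1 - gamma) >= m k * sigma0.
Proof.
  intros HK Hk Hgamma Hgamma_le Hsigma1 Hsigma0 Hsigma_gamma.
  assert (HgB : gamma * ((Fr (K + 2) - 3) * (1 + n)) <= 1).
  { apply mul_le_1_of_le_inv; [|exact Hgamma_le].
    assert (HF : Fr 4 <= Fr (K + 2)) by (apply Fr_le; lia).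
    change (Fr 4) with (1 + 1 + 1 + 1 + 1) in HF.
    pose proof (pos_INR N). apply Rmult_lt_0_compat; lra. }
  destruct k as [|k].
  - assert (Hl1 : l 1 = mu0 * Rpower sigma (1 + 0)).
    { pose proof (lam_S_div_mu 0 ltac:(lia)) as Hl1_div.
      change (m 0) with mu0 in Hl1_div. change (Fr 1) with 1 in Hl1_div.
      rewrite Rplus_0_r, <- Hl1_div. field. lra. }
    apply (Rpower_one_sub_ge mu0 sigma sigma0 gamma 0 (Fr 1));
      auto using mu_pos, Req_le.
    + apply lam_S_div_mu. lia.
    + change (Fr 1) with 1. lra.
  - assert (Hd : exists d, l (S (S k)) / m (S k) = Rpower sigma d /\ 2 <= d).
    { destruct (Nat.eq_dec (S (S k)) K) as [HkK|HkK].
      - exists (Fr (K - 2)). split.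
        + rewrite HkK. replace (S k) with (K - 1)%nat by lia. apply lam_K_div_mu. lia.
        + rewrite <- Fr_2. apply Fr_le. lia.
      - exists (Fr (S (S k))). split; [apply lam_S_div_mu; lia|].
        rewrite <- Fr_2. apply Fr_le. lia. }
    destruct Hd as [d [Hlm Hd]].
    apply (Rpower_one_sub_ge mu0 sigma sigma0 gamma ((Fr (K + 2) - 3) * (1 + n)) d);
      auto using mu_pos, lam_le; lra.
Qed.

Lemma mu_div_lam_1 : (2 <= K)%nat -> m 1 / l 1 = (l 1 / mu0) ^ N.
Proof.
  intro HK. change mu0 with (m 0).
  rewrite mu_div_lam, lam_S_div_mu, Rpower_pow_mul, Fr_2 by lia.
  f_equal. change (Fr 1) with 1. field.
Qed.

Lemma Rpower_mixed_ratio a b c :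
  Rpower sigma a ^ N * Rpower (Rpower sigma b) n / Rpower sigma (c * n)
  = Rpower sigma ((2 * a + b - c) * n).
Proof.
  rewrite Rpower_pow_mul, Rpower_mult, <- Rpower_plus, Rpower_div. f_equal. field.
Qed.

Lemma mu_div_lam_mid_ge k : (2 <= k < K)%nat ->
  m k / l k >=
  Rmax (Rpower (l k / m (k - 1)%nat * (l (k - 1)%nat / m (k - 2)%nat)) n)
       ((l k / m (k - 1)%nat) ^ N * Rpower (l (k - 1)%nat / m (k - 2)%nat) n
          / (m (k - 1)%nat / l (k - 1)%nat)).
Proof.
  intro Hk. destruct k as [|[|j]]; [lia|lia|].
  simpl Nat.sub. rewrite Nat.sub_0_r.
  rewrite mu_div_lam, !lam_S_div_mu, mu_div_lam, Rpower_mixed_ratio by lia.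
  rewrite <- Rpower_plus, Rpower_mult, (Fr_SS (S j)).
  apply Rle_ge, Rmax_lub; apply Req_le; f_equal; ring.
Qed.

Lemma mu_K_div_lam_ge : (4 <= K)%nat ->
  m K / l K >=
  Rmax (Rpower (l K / m (K - 1)%nat) n)
       ((l K / m (K - 1)%nat) ^ N * Rpower (l (K - 1)%nat / m (K - 2)%nat) n
          / (m (K - 1)%nat / l (K - 1)%nat)).
Proof.
  intro HK.
  rewrite mu_K_div_lam, lam_K_div_mu by lia.
  replace (K - 1)%nat with (S (K - 2)) by lia.
  rewrite lam_S_div_mu, mu_div_lam, Rpower_mixed_ratio by lia.
  rewrite Rpower_mult, (Fr_SS (K - 2)).
  apply Rle_ge, Rmax_lub; apply Req_le; f_equal; ring.
Qed.

End Schedule.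

Theorem proposition5p1 (N K : nat) (gamma mu0 sigma0 sigma : R) :
  (1 <= N)%nat -> (4 <= K)%nat ->
  0 < gamma < 1 ->
  gamma <= 1 / ((Fr (K + 2) - 3) * (1 + INR N / 2)) ->
  1 <= mu0 -> 1 <= sigma0 -> 1 <= sigma ->
  sigma / Rpower (mu0 * sigma) gamma >= sigma0 ->
  let l := lam N K mu0 sigma in
  let m := mu N K mu0 sigma in
  (forall k : nat, (k <= K - 1)%nat ->
     Rpower (l (k + 1)%nat) (1 - gamma) >= m k * sigma0) /\
  m 1%nat / l 1%nat >= (l 1%nat / mu0) ^ N /\
  (forall k : nat, (2 <= k <= K - 1)%nat ->
     m k / l k >=
     Rmax (Rpower (l k / m (k - 1)%nat * (l (k - 1)%nat / m (k - 2)%nat)) (INR N / 2))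
          ((l k / m (k - 1)%nat) ^ N
             * Rpower (l (k - 1)%nat / m (k - 2)%nat) (INR N / 2)
             / (m (k - 1)%nat / l (k - 1)%nat))) /\
  m K / l K >=
  Rmax (Rpower (l K / m (K - 1)%nat) (INR N / 2))
       ((l K / m (K - 1)%nat) ^ N
          * Rpower (l (K - 1)%nat / m (K - 2)%nat) (INR N / 2)
          / (m (K - 1)%nat / l (K - 1)%nat)).
Proof.
  intros _ HK Hgamma Hgamma_le Hmu0 Hsigma0 Hsigma Hsigma_gamma l m.
  split; [|split; [|split]].
  - intros k Hk. rewrite Nat.add_1_r. apply lam_S_Rpower_ge; lra || lia.
  - apply Req_ge, mu_div_lam_1; lra || lia.
  - intros k Hk. apply mu_div_lam_mid_ge; lra || lia.
  - apply mu_K_div_lam_ge; lra || lia.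
Qed.
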